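(* Let $\Bbbk$ be a field of characteristic $\neq 2$ and let $A_1,\dots,A_m\in\Bbbk^{n\times n}$ be symmetric matrices. There exists $P\in\mathrm{GL}_n(\Bbbk)$ such that $P^TA_iP$ is diagonal for every $1\le i\le m$ if and only if $Z(A_1,\dots,A_m)$ contains $n$ nonzero matrices $\epsilon_1,\dots,\epsilon_n$ with $\epsilon_j^2=\epsilon_j$, $\epsilon_j\epsilon_l=0$ for $j\ne l$, and $\epsilon_1+\cdots+\epsilon_n=I_n$.
   Context: The center of symmetric matrices $A_1,\dots,A_m\in\Bbbk^{n\times n}$ is $Z(A_1,\dots,A_m)=\{X\in\Bbbk^{n\times n} : (A_iX)^T=A_iX \text{ for all } 1\le i\le m\}$. *)

From HB Require Import structures.
From mathcomp Require Import all_boot all_order all_algebra.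
Set Implicit Arguments. Unset Strict Implicit. Unset Printing Implicit Defensive.
Import GRing.Theory.
Local Open Scope ring_scope.

Definition center (F : fieldType) (m n : nat) (A : 'I_m -> 'M[F]_n) : pred 'M[F]_n :=
  fun X => [forall i, ((A i *m X)^T == A i *m X)].

From HB Require Import structures.
From mathcomp Require Import all_boot all_order all_algebra.
Import GRing.Theory.
Set Implicit Arguments. Unset Strict Implicit. Unset Printing Implicit Defensive.
Local Open Scope ring_scope.

(* If P^T A_i P = D_i is diagonal for all i, the conjugates eps_j = P E_jj P^-1 of
   the matrix units form a complete family of orthogonal idempotents, and
   A_i eps_j = P^-T (D_i E_jj) P^-1 is symmetric because D_i commutes with E_jj.
   Conversely, pick a nonzero column v_j of each eps_j, so eps_j v_j = v_j and
   eps_l v_j = 0 for l != j.  Applying eps_l to a vanishing combination of the v_j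
   isolates its l-th coefficient, so P = [v_1 ... v_n] is invertible; and for
   j != l, v_j^T A_i v_l = v_j^T A_i eps_l v_l = (eps_l v_j)^T A_i^T v_l = 0 since
   A_i eps_l is symmetric, so P^T A_i P is diagonal. *)

Section MatrixLemmas.

Variables (F : fieldType) (n : nat).
Implicit Types (P X Y : 'M[F]_n) (d : 'rV[F]_n).

Lemma mx_neq0_col m p (M : 'M[F]_(m, p)) : M != 0 -> exists k, col k M != 0.
Proof.
move=> M0; apply/existsP; apply: contraR M0 => /existsPn M0.
apply/eqP/matrixP=> a b; have /negPn/eqP/colP/(_ a) := M0 b.
by rewrite !mxE.
Qed.

Definition mx_of_cols (v : 'I_n -> 'cV[F]_n) : 'M[F]_n := \matrix_(a, j) v j a 0.

Lemma col_mx_of_cols v j : col j (mx_of_cols v) = v j.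
Proof. by apply/colP=> a; rewrite !mxE. Qed.

Lemma congruence_entry P (A : 'M[F]_n) j l :
  (P^T *m A *m P) j l = ((col j P)^T *m A *m col l P) 0 0.
Proof. by rewrite tr_col -row_mul !mxE; apply: eq_bigr => k _; rewrite !mxE. Qed.

Lemma mul_conj_unitmx P X Y : P \in unitmx ->
  (P *m X *m invmx P) *m (P *m Y *m invmx P) = P *m (X *m Y) *m invmx P.
Proof. by move=> uP; rewrite !mulmxA mulmxKV. Qed.

Lemma mulmx_conj_unitmx P (A X : 'M[F]_n) : P \in unitmx ->
  A *m (P *m X *m invmx P) = (invmx P)^T *m ((P^T *m A *m P) *m X) *m invmx P.
Proof.
by move=> uP; rewrite !mulmxA -trmx_mul mulmxV // trmx1 mul1mx.
Qed.

Lemma tr_congruence (Q S : 'M[F]_n) : S^T = S -> (Q^T *m S *m Q)^T = Q^T *m S *m Q.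
Proof. by move=> symS; rewrite !trmx_mul trmxK symS mulmxA. Qed.

Lemma diag_mx_delta_comm d (j : 'I_n) :
  diag_mx d *m delta_mx j j = delta_mx j j *m diag_mx d.
Proof.
apply/matrixP=> a b; rewrite mul_diag_mx mul_mx_diag !mxE.
by case: (eqVneq a j) => [->|_]; case: (eqVneq j b) => [<-|_];
  rewrite ?mulr0 ?mul0r ?mulr1 ?mul1r.
Qed.

Lemma sym_diag_mx_delta d (j : 'I_n) :
  (diag_mx d *m delta_mx j j)^T = diag_mx d *m delta_mx j j.
Proof. by rewrite trmx_mul trmx_delta tr_diag_mx diag_mx_delta_comm. Qed.

Lemma sum_conj_delta P : P \in unitmx ->
  \sum_(j < n) P *m delta_mx j j *m invmx P = 1%:M.
Proof. by move=> uP; rewrite -mulmx_suml -mulmx_sumr -mx1_sum_delta mulmx1 mulmxV. Qed.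

Lemma conj_delta_neq0 P (j : 'I_n) : P \in unitmx -> P *m delta_mx j j *m invmx P != 0.
Proof.
move=> uP; rewrite mulmx_free_eq0 ?row_free_unit ?unitmx_inv //.
rewrite -trmx_eq0 trmx_mul mulmx_free_eq0 ?row_free_unit ?unitmx_tr // trmx_eq0.
by apply/eqP => /matrixP/(_ j j)/eqP; rewrite !mxE !eqxx oner_eq0.
Qed.

Lemma unitmx_fixed_cols (eps : 'I_n -> 'M[F]_n) (v : 'I_n -> 'cV[F]_n) :
  (forall j, v j != 0) -> (forall j, eps j *m v j = v j) ->
  (forall j l, j != l -> eps l *m v j = 0) ->
  mx_of_cols v \in unitmx.
Proof.
move=> v0 fixv killv; rewrite -unitmx_tr -row_free_unit.
apply: inj_row_free => x xP0; apply/rowP=> l; rewrite mxE.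
have : x *m (mx_of_cols v)^T *m (eps l)^T = 0 by rewrite xP0 mul0mx.
rewrite (mulmx_sum_row x) mulmx_suml (bigD1 l) //= big1 ?addr0 => [|j jl].
  rewrite -scalemxAl -tr_col col_mx_of_cols -trmx_mul fixv => /eqP.
  by rewrite scaler_eq0 trmx_eq0 (negPf (v0 l)) orbF => /eqP.
by rewrite -scalemxAl -tr_col col_mx_of_cols -trmx_mul killv ?trmx0 ?scaler0.
Qed.

Lemma form_orthogonal (A X : 'M[F]_n) (u w : 'cV[F]_n) :
  (A *m X)^T = A *m X -> X *m u = 0 -> X *m w = w -> (u^T *m A *m w) 0 0 = 0.
Proof.
move=> symAX Xu Xw.
by rewrite -Xw mulmxA -(mulmxA _ A) -symAX trmx_mul mulmxA -trmx_mul Xu trmx0 !mul0mx mxE.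
Qed.

End MatrixLemmas.

Lemma center_sym (F : fieldType) m n (A : 'I_m -> 'M[F]_n) X i :
  X \in center A -> (A i *m X)^T = A i *m X.
Proof. by rewrite unfold_in => /forallP /(_ i) /eqP. Qed.

Lemma center_conj_delta (F : fieldType) m n (A : 'I_m -> 'M[F]_n) P j :
  P \in unitmx -> (forall i, is_diag_mx (P^T *m A i *m P)) ->
  P *m delta_mx j j *m invmx P \in center A.
Proof.
move=> uP diagA; rewrite unfold_in; apply/forallP=> i; apply/eqP.
have /diag_mxP[d diagAi] := diagA i.
by rewrite mulmx_conj_unitmx // diagAi tr_congruence // sym_diag_mx_delta.
Qed.

Lemma idempotents_of_congruence_diag (F : fieldType) m n (A : 'I_m -> 'M[F]_n) P :
  P \in unitmx -> (forall i, is_diag_mx (P^T *m A i *m P)) ->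
  exists eps : 'I_n -> 'M[F]_n,
    [/\ forall j, eps j \in center A,
        forall j, eps j != 0,
        forall j, eps j *m eps j = eps j,
        forall j l, j != l -> eps j *m eps l = 0
      & \sum_(j < n) eps j = 1%:M].
Proof.
move=> uP diagA; exists (fun j => P *m delta_mx j j *m invmx P); split.
- by move=> j; exact: center_conj_delta.
- by move=> j; exact: conj_delta_neq0.
- by move=> j; rewrite mul_conj_unitmx // mul_delta_mx.
- by move=> j l jl; rewrite mul_conj_unitmx // mul_delta_mx_0 // mulmx0 mul0mx.
- exact: sum_conj_delta.
Qed.

Lemma congruence_diag_of_idempotents (F : fieldType) m n (A : 'I_m -> 'M[F]_n)
    (eps : 'I_n -> 'M[F]_n) :
  (forall j, eps j \in center A) -> (forall j, eps j != 0) ->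
  (forall j, eps j *m eps j = eps j) ->
  (forall j l, j != l -> eps j *m eps l = 0) ->
  exists P : 'M[F]_n, P \in unitmx /\ forall i, is_diag_mx (P^T *m A i *m P).
Proof.
move=> epsZ eps0 idem orth.
have /all_sig[k vk0] : forall j, {k | col k (eps j) != 0}.
  by move=> j; apply: sigW; exact: mx_neq0_col.
pose v j := col (k j) (eps j).
have fixv j : eps j *m v j = v j by rewrite /v !colE mulmxA idem.
have killv j l : j != l -> eps l *m v j = 0.
  by move=> jl; rewrite -fixv mulmxA orth ?mul0mx // eq_sym.
exists (mx_of_cols v); split; first exact: unitmx_fixed_cols vk0 fixv killv.
move=> i; apply/is_diag_mxP=> j l jl.
rewrite congruence_entry !col_mx_of_cols.
by apply: form_orthogonal (center_sym i (epsZ l)) _ (fixv l); apply: killv.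
Qed.

Theorem mainTheorem3 (F : fieldType) (m n : nat) (A : 'I_m -> 'M[F]_n)
  (hchar : (2%:R : F) != 0)
  (hsym : forall i, (A i)^T = A i) :
  (exists P : 'M[F]_n, P \in unitmx /\ forall i, is_diag_mx (P^T *m A i *m P)) <->
  (exists eps : 'I_n -> 'M[F]_n,
     [/\ forall j, eps j \in center A,
         forall j, eps j != 0,
         forall j, eps j *m eps j = eps j,
         forall j l, j != l -> eps j *m eps l = 0
       & \sum_(j < n) eps j = 1%:M]).
Proof.
split=> [[P [uP diagA]] | [eps [epsZ eps0 idem orth _]]].
- exact: idempotents_of_congruence_diag uP diagA.
- exact: congruence_diag_of_idempotents epsZ eps0 idem orth.
Qed.
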